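(* Let $n\ge2$, let $m\ge 3$ be odd, and let $\mathcal{A}$ be an $m$th order $n$-dimensional complete Hankel tensor which has at least one H-eigenvalue. Then all H-eigenvalues of $\mathcal{A}$ are nonnegative. Moreover, if $\lambda$ is an H-eigenvalue of $\mathcal{A}$ with H-eigenvector $x=(x_1,\dots,x_n)^\top$, then either $\lambda=0$, or $\lambda>0$ and $x_1\neq 0$.
   Context: A complete Hankel tensor is a tensor of the form $\mathcal{A}=\sum_{k=1}^r\alpha_k(u_k)^m$ with $\alpha_k>0$, $u_k=(1,u_k,u_k^2,\dots,u_k^{n-1})^\top$ for pairwise distinct reals $u_1,\dots,u_r$, where $w^m$ denotes the tensor with entries $w_{i_1}\cdots w_{i_m}$. For a symmetric tensor $\mathcal{A}=(a_{i_1\cdots i_m})$ and $x\in\mathbb{C}^n$, $\mathcal{A}x^{m-1}$ is the vector with $i$th component $\sum_{i_2,\dots,i_m=1}^n a_{ii_2\cdots i_m}x_{i_2}\cdots x_{i_m}$, and $x^{[m-1]}$ is the vector with $i$th component $x_i^{m-1}$. A real number $\lambda$ is an H-eigenvalue of $\mathcal{A}$ with H-eigenvector $x$ if $x\in\mathbb{R}^n\setminus\{0\}$ and $\mathcal{A}x^{m-1}=\lambda x^{[m-1]}$. *)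

From mathcomp Require Import all_boot all_order all_algebra.
From mathcomp Require Import reals.
Set Implicit Arguments. Unset Strict Implicit. Unset Printing Implicit Defensive.
Import Order.TTheory GRing.Theory Num.Theory.
Local Open Scope ring_scope.

(* An m-th order n-dimensional real tensor: entries indexed by
   (i_1,...,i_m) encoded as f : {ffun 'I_m -> 'I_n}; i_{j+1} = f j,
   indices 0-based (so i = 0 corresponds to the paper's index 1). *)
Definition tensor (R : Type) (m n : nat) := {ffun 'I_m -> 'I_n} -> R.

Definition tmul (R : realType) (m n : nat) (A : tensor R m n)
  (x : 'I_n -> R) (i : 'I_n) : R :=
  \sum_(f : {ffun 'I_m -> 'I_n} | [forall j : 'I_m, (val j == 0%N) ==> (f j == i)])
     A f * \prod_(j : 'I_m | val j != 0%N) x (f j).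

(* Complete Hankel tensor: A = sum_{k} alpha_k (u_k)^m with alpha_k > 0,
   u_k = (1, u_k, ..., u_k^{n-1}), pairwise distinct u_k. The entry of
   (u_k)^m at (i_1..i_m) is prod_j u_k^{i_j} (0-based exponents). *)
Definition complete_hankel (R : realType) (m n : nat) (A : tensor R m n) : Prop :=
  exists (r : nat) (alpha : 'I_r -> R) (u : 'I_r -> R),
    (forall k, 0 < alpha k) /\ injective u /\
    forall f : {ffun 'I_m -> 'I_n},
      A f = \sum_(k < r) alpha k * \prod_(j < m) u k ^+ (val (f j)).

Definition H_eigenpair (R : realType) (m n : nat) (A : tensor R m n)
  (lambda : R) (x : 'I_n -> R) : Prop :=
  (exists i, x i != 0) /\ forall i, tmul A x i = lambda * x i ^+ m.-1.

Definition is_H_eigenvalue (R : realType) (m n : nat) (A : tensor R m n) (lambda : R) :=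
  exists x, H_eigenpair A lambda x.

From mathcomp Require Import all_boot all_order all_algebra.
From mathcomp Require Import reals.
Set Implicit Arguments. Unset Strict Implicit. Unset Printing Implicit Defensive.
Import Order.TTheory GRing.Theory Num.Theory.
Local Open Scope ring_scope.

(* For A = sum_k alpha_k (u_k)^m one has (A x^{m-1})_i = sum_k alpha_k u_k^i (u_k . x)^{m-1}.
   When m is odd the exponent m-1 is even, so the first component (i = 1 in the
   paper, i = 0 here) is a sum of nonnegative terms; it equals lambda x_1^{m-1}.
   If x_1 = 0, every u_k . x vanishes, hence A x^{m-1} = 0 and lambda = 0;
   otherwise x_1^{m-1} > 0 forces lambda >= 0. *)

Lemma tmul_pow_tensor (R : realType) (m n : nat) (v : R) (x : 'I_n -> R)
    (i : 'I_n) :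
  (0 < m)%N ->
  tmul (fun f : {ffun 'I_m -> 'I_n} => \prod_(j < m) v ^+ f j) x i
  = v ^+ i * (\sum_(l < n) v ^+ l * x l) ^+ m.-1.
Proof.
move=> m_gt0; pose j0 : 'I_m := Ordinal m_gt0.
have val_eq0 (j : 'I_m) : (val j == 0%N) = (j == j0).
  by rewrite -(inj_eq val_inj).
(* The right side is a product of m sums whose first factor only keeps l = i;
   distributing it over all f : 'I_m -> 'I_n gives the defining sum of tmul. *)
pose F (j : 'I_m) (l : 'I_n) : R :=
  if j == j0 then (l == i)%:R * v ^+ l else v ^+ l * x l.
transitivity (\prod_(j < m) \sum_(l < n) F j l); last first.
  rewrite (bigD1 j0) //= {1}/F eqxx (bigD1 i) //= eqxx mul1r big1 ?addr0;
    last by move=> l /negbTE ->; rewrite mul0r.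
  rewrite (eq_bigr (fun _ => \sum_(l < n) v ^+ l * x l)); last first.
    by move=> j /negbTE j_neq0; apply: eq_bigr => l _; rewrite /F j_neq0.
  by rewrite prodr_const cardC1 card_ord.
rewrite /tmul bigA_distr_bigA /= big_mkcond /=; apply: eq_bigr => f _.
have -> : [forall j, (val j == 0%N) ==> (f j == i)] = (f j0 == i).
  apply/forallP/idP => [/(_ j0) //| /eqP f_j0 j].
  by rewrite val_eq0; apply/implyP => /eqP ->; rewrite f_j0.
rewrite [in LHS](bigD1 j0) //= [in RHS](bigD1 j0) //= {1}/F eqxx.
rewrite (eq_bigl (fun j => j != j0) (P1 := fun j : 'I_m => val j != 0%N));
  last by move=> j; rewrite val_eq0.
case: eqP => [-> | _]; last by rewrite !mul0r.
rewrite !mul1r -mulrA -big_split /=; congr (_ * _).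
by apply: eq_bigr => j /negbTE j_neq0; rewrite /F j_neq0.
Qed.

Lemma tmul_sum_pow_tensor (R : realType) (m n r : nat) (A : tensor R m n)
    (alpha u : 'I_r -> R) (x : 'I_n -> R) (i : 'I_n) :
  (0 < m)%N ->
  (forall f, A f = \sum_(k < r) alpha k * \prod_(j < m) u k ^+ f j) ->
  tmul A x i
  = \sum_(k < r) alpha k * (u k ^+ i * (\sum_(l < n) u k ^+ l * x l) ^+ m.-1).
Proof.
move=> m_gt0 defA; rewrite /tmul.
under eq_bigr => f _ do rewrite defA big_distrl /=.
rewrite exchange_big /=; apply: eq_bigr => k _.
rewrite -(tmul_pow_tensor _ _ _ m_gt0) /tmul big_distrr /=.
by apply: eq_bigr => f _; rewrite mulrA.
Qed.

Section OddOrderCompleteHankel.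

Variables (R : realType) (m n r : nat) (A : tensor R m n) (alpha u : 'I_r -> R).
Hypothesis alpha_gt0 : forall k, 0 < alpha k.
Hypothesis defA :
  forall f, A f = \sum_(k < r) alpha k * \prod_(j < m) u k ^+ f j.
Hypotheses (m_gt1 : (1 < m)%N) (m_odd : odd m).
Variable i0 : 'I_n.
Hypothesis i0_eq0 : val i0 = 0%N.

Let m_gt0 : (0 < m)%N. Proof. exact: ltnW. Qed.
Let even_pred_m : ~~ odd m.-1. Proof. by case: (m) m_odd => //= m' ->. Qed.

Let tmul_first (x : 'I_n -> R) :
  tmul A x i0 = \sum_(k < r) alpha k * (\sum_(l < n) u k ^+ l * x l) ^+ m.-1.
Proof.
by rewrite (tmul_sum_pow_tensor _ _ m_gt0 defA) i0_eq0; under eq_bigr do rewrite mul1r.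
Qed.

Let summand_ge0 (x : 'I_n -> R) (k : 'I_r) :
  0 <= alpha k * (\sum_(l < n) u k ^+ l * x l) ^+ m.-1.
Proof. by apply: mulr_ge0; [exact: ltW | exact: exprn_even_ge0]. Qed.

Lemma tmul_first_ge0 (x : 'I_n -> R) : 0 <= tmul A x i0.
Proof. by rewrite tmul_first sumr_ge0. Qed.

Lemma tmul_first_eq0 (x : 'I_n -> R) :
  tmul A x i0 = 0 -> forall i, tmul A x i = 0.
Proof.
rewrite tmul_first => /(psumr_eq0P (fun k _ => summand_ge0 x k)) sum_eq0 i.
rewrite (tmul_sum_pow_tensor _ _ m_gt0 defA) big1 // => k _.
have /eqP := sum_eq0 k isT; rewrite mulf_eq0 gt_eqF //=.
by move/eqP ->; rewrite !mulr0.
Qed.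

Lemma H_eigenpair_first_eq0 (lambda : R) (x : 'I_n -> R) :
  H_eigenpair A lambda x -> x i0 = 0 -> lambda = 0.
Proof.
move=> [[i xi_neq0] eig] x_i0_eq0.
have m1_gt0 : (0 < m.-1)%N by rewrite -ltnS prednK.
have /tmul_first_eq0 tmul_eq0 : tmul A x i0 = 0.
  by rewrite eig x_i0_eq0 expr0n gtn_eqF // mulr0.
have /eqP := eig i; rewrite tmul_eq0 eq_sym mulf_eq0 expf_eq0 (negbTE xi_neq0).
by rewrite andbF orbF => /eqP.
Qed.

Lemma H_eigenpair_ge0 (lambda : R) (x : 'I_n -> R) :
  H_eigenpair A lambda x -> 0 <= lambda.
Proof.
move=> eigx; have [/(H_eigenpair_first_eq0 eigx) -> // | x_i0_neq0] := eqVneq (x i0) 0.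
have pow_gt0 : 0 < x i0 ^+ m.-1 by rewrite exprn_even_gt0 ?x_i0_neq0 ?orbT.
by rewrite -(pmulr_lge0 _ pow_gt0) -eigx.2 tmul_first_ge0.
Qed.

End OddOrderCompleteHankel.

Theorem proposition4 (R : realType) (n m : nat) (A : tensor R m n) :
  (2 <= n)%N -> (3 <= m)%N -> odd m -> complete_hankel A ->
  (exists lambda : R, is_H_eigenvalue A lambda) ->
  (forall lambda : R, is_H_eigenvalue A lambda -> 0 <= lambda) /\
  (forall (lambda : R) (x : 'I_n -> R), H_eigenpair A lambda x ->
     lambda = 0 \/ (0 < lambda /\ forall i : 'I_n, val i = 0%N -> x i != 0)).
Proof.
move=> n_ge2 m_ge3 m_odd [r [alpha [u [alpha_gt0 [_ defA]]]]] _.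
have m_gt1 : (1 < m)%N by apply: ltnW.
pose i0 : 'I_n := Ordinal (ltnW n_ge2).
have eig_ge0 := H_eigenpair_ge0 alpha_gt0 defA m_gt1 m_odd (i0 := i0) erefl.
split=> [lambda [x /eig_ge0] // | lambda x eigx].
have [-> | lambda_neq0] := eqVneq lambda 0; [by left | right].
split=> [|i i_eq0]; first by rewrite lt_def lambda_neq0 (eig_ge0 _ _ eigx).
apply/eqP => /(H_eigenpair_first_eq0 alpha_gt0 defA m_gt1 m_odd i_eq0 eigx) /eqP.
by rewrite (negbTE lambda_neq0).
Qed.
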